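(* For $\lambda>0$ and $c>0$, let $V\sim\mathrm{Exp}(\lambda)$, let $V_1,V_2$ be independent copies of $V$, $V_{(1:2)}=\min(V_1,V_2)$, $V_{(2:2)}=\max(V_1,V_2)$, and for $p_0\ge0$, $r\in[0,1]$ define the creator's expected profit $P(p_0,r)=R(p_0,r)-c$, where $$R(p_0,r)=\begin{cases}2p_0+2r\,\mathbb{E}[V] & \text{if } p_0\le (1-r)\mathbb{E}[V_{(1:2)}],\\ p_0+r\,\mathbb{E}[V_{(2:2)}]+p_0\Pr[V_{(1:2)}>p_0] & \text{if } (1-r)\mathbb{E}[V_{(1:2)}]<p_0\le(1-r)\mathbb{E}[V_{(2:2)}],\\ 2p_0\Pr[V>p_0] & \text{if } p_0>(1-r)\mathbb{E}[V_{(2:2)}].\end{cases}$$ Let $u_c^*=\sup_{p_0\ge0,r\in[0,1]}P(p_0,r)$ and $u_{c,r=0}^*=\sup_{p_0\ge0}P(p_0,0)$. Then the set $\mathbb{T}=\{(\lambda,c):\ u_c^*\ge0,\ u_{c,r=0}^*<0,\ \lambda>0,\ c>0\}$ is non-empty.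
   Context: $R$ is the expected revenue of a creator selling a two-unit NFT collection at common mint price $p_0$ with royalty rate $r$ in the presence of a risk-neutral speculator who buys 2, 1 or 0 units in the three price regions respectively; $c$ is the creator's cost. Trade occurs iff the optimal profit is nonnegative. *)

From Stdlib Require Import Reals.
From Coquelicot Require Import Coquelicot.
Open Scope R_scope.

Definition exp_density (lam v : R) : R := if Rlt_dec v 0 then 0 else lam * exp (- lam * v).

Definition RInt_R (f : R -> R) : R :=
  RInt_gen f (Rbar_locally m_infty) (Rbar_locally p_infty).

Definition E1 (lam : R) (g : R -> R) : R :=
  RInt_R (fun v => g v * exp_density lam v).

Definition E2 (lam : R) (g : R -> R -> R) : R :=
  RInt_R (fun v1 => RInt_R (fun v2 => g v1 v2 * exp_density lam v1 * exp_density lam v2)).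


Definition EV (lam : R) : R := E1 lam (fun v => v).
Definition EVmin (lam : R) : R := E2 lam (fun v1 v2 => Rmin v1 v2).
Definition EVmax (lam : R) : R := E2 lam (fun v1 v2 => Rmax v1 v2).
Definition PrV_gt (lam p : R) : R := E1 lam (fun v => if Rlt_dec p v then 1 else 0).
Definition PrVmin_gt (lam p : R) : R :=
  E2 lam (fun v1 v2 => if Rlt_dec p (Rmin v1 v2) then 1 else 0).

Definition Rev (lam p0 r : R) : R :=
  if Rle_dec p0 ((1 - r) * EVmin lam) then 2 * p0 + 2 * r * EV lam
  else if Rle_dec p0 ((1 - r) * EVmax lam) then
    p0 + r * EVmax lam + p0 * PrVmin_gt lam p0
  else 2 * p0 * PrV_gt lam p0.

Definition Profit (lam c p0 r : R) : R := Rev lam p0 r - c.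

Definition u_star (lam c : R) : Rbar :=
  Lub_Rbar (fun x => exists p0 r, 0 <= p0 /\ 0 <= r <= 1 /\ x = Profit lam c p0 r).

Definition u_star_r0 (lam c : R) : Rbar :=
  Lub_Rbar (fun x => exists p0, 0 <= p0 /\ x = Profit lam c p0 0).

(* For V ~ Exp(lam) every quantity in the revenue has a closed form, each obtained
   from an explicit antiderivative: E V = 1/lam, E min = 1/(2 lam), E max = 3/(2 lam),
   Pr[V > p] = e^(-lam p) and Pr[min > p] = e^(-2 lam p).  Minting at price 0 with full
   royalty r = 1 earns 2 E V = 2/lam.  Without royalty, writing q = lam p0, the three
   price regions give lam R(p0, 0) = 2q, q + q e^(-2q) or 2q e^(-q), all at most 15/8.
   So for c = 2/lam we get u* >= 0 while u*_{r=0} <= -1/(8 lam) < 0. *)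

From Pilot Require Import Defs.
From Stdlib Require Import Reals Lra.
From Coquelicot Require Import Coquelicot.
Open Scope R_scope.

Lemma is_lim_linear_neg lam : 0 < lam -> is_lim (fun x => - lam * x) p_infty m_infty.
Proof.
  intros Hlam.
  apply (is_lim_ext (fun x => - (lam * x))); [intros; ring|].
  change m_infty with (Rbar_opp p_infty); apply is_lim_opp.
  replace p_infty with (Rbar_mult lam p_infty) at 2.
  - apply is_lim_scal_l, is_lim_id.
  - simpl. destruct Rle_dec as [h|h]; [destruct Rle_lt_or_eq_dec; [auto|lra]|lra].
Qed.

Lemma is_lim_comp_linear_neg (f : R -> R) lam L : 0 < lam ->
  is_lim f m_infty L -> is_lim (fun x => f (- lam * x)) p_infty L.
Proof.
  intros Hlam Hf. apply (is_lim_comp f _ p_infty L m_infty Hf (is_lim_linear_neg lam Hlam)).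
  exists 0. intros; discriminate.
Qed.

Lemma is_lim_exp_neg lam : 0 < lam -> is_lim (fun x => exp (- lam * x)) p_infty 0.
Proof. intros Hlam. apply (is_lim_comp_linear_neg exp); [exact Hlam | apply is_lim_exp_m]. Qed.

Lemma is_lim_mul_exp_neg lam : 0 < lam -> is_lim (fun x => x * exp (- lam * x)) p_infty 0.
Proof.
  intros Hlam.
  apply (is_lim_ext (fun x => - / lam * ((- lam * x) * exp (- lam * x)))).
  { intros; field; lra. }
  replace (Finite 0) with (Rbar_mult (- / lam) 0) by (simpl; f_equal; ring).
  apply is_lim_scal_l, (is_lim_comp_linear_neg (fun y => y * exp y)); [exact Hlam|].
  apply is_lim_mul_exp_m.
Qed.

Lemma is_lim_0_scal (x : Rbar) (f : R -> R) c :
  is_lim f x 0 -> is_lim (fun y => c * f y) x 0.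
Proof.
  intros H. replace (Finite 0) with (Rbar_mult c 0) by (simpl; f_equal; ring).
  now apply is_lim_scal_l.
Qed.

Lemma is_lim_0_opp (x : Rbar) (f : R -> R) : is_lim f x 0 -> is_lim (fun y => - f y) x 0.
Proof.
  intros H. replace (Finite 0) with (Rbar_opp 0) by (simpl; f_equal; ring).
  now apply is_lim_opp.
Qed.

Lemma is_lim_0_plus (x : Rbar) (f g : R -> R) :
  is_lim f x 0 -> is_lim g x 0 -> is_lim (fun y => f y + g y) x 0.
Proof.
  intros Hf Hg. replace (Finite 0) with (Finite (0 + 0)) by (f_equal; ring).
  now apply is_lim_plus'.
Qed.

Lemma is_lim_0_mult (x : Rbar) (f g : R -> R) :
  is_lim f x 0 -> is_lim g x 0 -> is_lim (fun y => f y * g y) x 0.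
Proof.
  intros Hf Hg. replace (Finite 0) with (Rbar_mult 0 0) by (simpl; f_equal; ring).
  apply is_lim_mult; auto. simpl; auto.
Qed.

Ltac solve_lim0 :=
  unfold Rminus;
  repeat first [ apply is_lim_mul_exp_neg | apply is_lim_exp_neg | apply is_lim_0_plus
               | apply is_lim_0_opp | apply is_lim_0_scal | apply is_lim_0_mult ];
  assumption.

Lemma is_RInt_gen_antiderivative {Fa Fb : (R -> Prop) -> Prop} {FFa : Filter Fa}
  {FFb : Filter Fb} (f F : R -> R) la lb :
  (forall x, is_derive F x (f x)) -> (forall x, continuous f x) ->
  filterlim F Fa (locally la) -> filterlim F Fb (locally lb) ->
  is_RInt_gen f Fa Fb (lb - la).
Proof.
  intros Hd Hc Ha Hb.
  apply is_RInt_gen_ext with (Derive F).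
  { apply filter_forall. intros ab x _. now apply is_derive_unique. }
  apply is_RInt_gen_Derive; auto; apply filter_forall; intros ab x _.
  - now exists (f x).
  - apply continuous_ext with f; auto.
    intros y; symmetry; now apply is_derive_unique.
Qed.

Lemma is_RInt_gen_vanishing (f : R -> R) a : (forall x, x < a -> f x = 0) ->
  is_RInt_gen f (Rbar_locally m_infty) (at_point a) 0.
Proof.
  intros H.
  apply is_RInt_gen_ext with (fun _ => 0).
  - apply Filter_prod with (fun x => x < a) (fun x => x = a).
    + now exists a.
    + reflexivity.
    + intros u v Hu -> x Hx. simpl in Hx.
      rewrite Rmin_left, Rmax_right in Hx by lra. symmetry; apply H; lra.
  - rewrite <- (Rminus_diag 0) at 1.
    apply (is_RInt_gen_antiderivative _ (fun _ => 0)).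
    + intros x. auto_derive; auto.
    + intros; apply continuous_const.
    + apply filterlim_const.
    + apply filterlim_const.
Qed.

Lemma is_RInt_gen_tail (f g F : R -> R) a (L : R) :
  (forall x, is_derive F x (g x)) -> (forall x, continuous g x) ->
  (forall x, a < x -> f x = g x) -> is_lim F p_infty L ->
  is_RInt_gen f (at_point a) (Rbar_locally p_infty) (L - F a).
Proof.
  intros Hd Hc He Hl.
  apply is_RInt_gen_ext with g.
  - apply Filter_prod with (fun x => x = a) (fun x => a < x).
    + reflexivity.
    + now exists a.
    + intros u v -> Hv x Hx. simpl in Hx.
      rewrite Rmin_left, Rmax_right in Hx by lra. symmetry; apply He; lra.
  - apply (is_RInt_gen_antiderivative g F); auto.
    intros P HP. exact (locally_singleton _ _ HP).
Qed.

Lemma RInt_R_antiderivative2 a b (f g1 F1 g2 F2 : R -> R) (L : R) : a <= b ->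
  (forall x, x < a -> f x = 0) ->
  (forall x, is_derive F1 x (g1 x)) -> (forall x, continuous g1 x) ->
  (forall x, is_derive F2 x (g2 x)) -> (forall x, continuous g2 x) ->
  (forall x, a < x < b -> f x = g1 x) -> (forall x, b < x -> f x = g2 x) ->
  is_lim F2 p_infty L ->
  RInt_R f = (F1 b - F1 a) + (L - F2 b).
Proof.
  intros Hab H0 Hd1 Hc1 Hd2 Hc2 He1 He2 Hl. apply is_RInt_gen_unique.
  replace ((F1 b - F1 a) + (L - F2 b)) with (plus 0 (plus (F1 b - F1 a) (L - F2 b)))
    by (unfold plus; simpl; ring).
  apply (is_RInt_gen_Chasles (V := R_NormedModule) f a).
  { now apply is_RInt_gen_vanishing. }
  apply (is_RInt_gen_Chasles (V := R_NormedModule) f b).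
  - apply is_RInt_gen_at_point, is_RInt_ext with g1.
    + rewrite Rmin_left, Rmax_right by lra. intros x Hx. symmetry; now apply He1.
    + apply (is_RInt_derive F1 g1); auto.
  - now apply is_RInt_gen_tail with g2.
Qed.

Lemma RInt_R_antiderivative a (f g F : R -> R) (L : R) : (forall x, x < a -> f x = 0) ->
  (forall x, is_derive F x (g x)) -> (forall x, continuous g x) ->
  (forall x, a < x -> f x = g x) -> is_lim F p_infty L ->
  RInt_R f = L - F a.
Proof.
  intros H0 Hd Hc He Hl.
  rewrite (RInt_R_antiderivative2 a a f g F g F L); auto; [ring | lra |].
  intros x Hx; lra.
Qed.

Lemma RInt_R_eq0 f : (forall x, f x = 0) -> RInt_R f = 0.
Proof.
  intros H. rewrite (RInt_R_antiderivative 0 f (fun _ => 0) (fun _ => 0) 0); auto.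
  - ring.
  - intros x. auto_derive; auto.
  - intros; apply continuous_const.
  - apply is_lim_const.
Qed.

Lemma exp_density_nonneg lam v : 0 <= v -> exp_density lam v = lam * exp (- lam * v).
Proof. intros H. unfold exp_density. destruct Rlt_dec; [lra | reflexivity]. Qed.

Lemma exp_density_neg lam v : v < 0 -> exp_density lam v = 0.
Proof. intros H. unfold exp_density. destruct Rlt_dec; [reflexivity | lra]. Qed.

Ltac solve_derive := intros ?; auto_derive; [auto | field; lra].
Ltac solve_continuous :=
  intros ?; apply (ex_derive_continuous (V := R_NormedModule)); auto_derive; auto.

Section Exponential.

Variable lam : R.
Hypothesis lam_gt0 : 0 < lam.

Lemma EV_exp : EV lam = 1 / lam.
Proof.
  (* plain [E1] would denote Stdlib's partial sums of the exponential series *)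
  unfold EV, Defs.E1.
  rewrite (RInt_R_antiderivative 0 _ (fun x => lam * x * exp (- lam * x))
             (fun x => - (x * exp (- lam * x)) - / lam * exp (- lam * x)) 0).
  - rewrite Rmult_0_r, exp_0. field; lra.
  - intros x Hx. rewrite exp_density_neg; auto; ring.
  - solve_derive.
  - solve_continuous.
  - intros x Hx. rewrite exp_density_nonneg; lra.
  - solve_lim0.
Qed.

Lemma RInt_R_min_density v1 : 0 <= v1 ->
  RInt_R (fun v2 => Rmin v1 v2 * exp_density lam v1 * exp_density lam v2)
  = exp (- lam * v1) - exp (- lam * v1) * exp (- lam * v1).
Proof.
  intros Hv1.
  rewrite (RInt_R_antiderivative2 0 v1 _
     (fun x => lam * exp (- lam * v1) * (lam * x * exp (- lam * x)))
     (fun x => lam * exp (- lam * v1) * (- (x * exp (- lam * x)) - / lam * exp (- lam * x)))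
     (fun x => v1 * lam * exp (- lam * v1) * (lam * exp (- lam * x)))
     (fun x => - (v1 * lam * exp (- lam * v1)) * exp (- lam * x)) 0); auto.
  - rewrite Rmult_0_r, exp_0. field; lra.
  - intros x Hx. rewrite (exp_density_neg _ x); auto; ring.
  - solve_derive.
  - solve_continuous.
  - solve_derive.
  - solve_continuous.
  - intros x Hx. rewrite Rmin_right, !exp_density_nonneg by lra. ring.
  - intros x Hx. rewrite Rmin_left, !exp_density_nonneg by lra. ring.
  - solve_lim0.
Qed.

Lemma EVmin_exp : EVmin lam = (1/2) / lam.
Proof.
  unfold EVmin, E2.
  rewrite (RInt_R_antiderivative 0 _
    (fun x => exp (- lam * x) - exp (- lam * x) * exp (- lam * x))
    (fun x => - / lam * exp (- lam * x) + / (2 * lam) * (exp (- lam * x) * exp (- lam * x))) 0).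
  - rewrite Rmult_0_r, exp_0. field; lra.
  - intros x Hx. apply RInt_R_eq0. intros y. rewrite (exp_density_neg _ x); auto; ring.
  - solve_derive.
  - solve_continuous.
  - intros x Hx. apply RInt_R_min_density; lra.
  - solve_lim0.
Qed.

Lemma RInt_R_max_density v1 : 0 <= v1 ->
  RInt_R (fun v2 => Rmax v1 v2 * exp_density lam v1 * exp_density lam v2)
  = lam * v1 * exp (- lam * v1) + exp (- lam * v1) * exp (- lam * v1).
Proof.
  intros Hv1.
  rewrite (RInt_R_antiderivative2 0 v1 _
     (fun x => v1 * lam * exp (- lam * v1) * (lam * exp (- lam * x)))
     (fun x => - (v1 * lam * exp (- lam * v1)) * exp (- lam * x))
     (fun x => lam * exp (- lam * v1) * (lam * x * exp (- lam * x)))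
     (fun x => lam * exp (- lam * v1) * (- (x * exp (- lam * x)) - / lam * exp (- lam * x)))
     0); auto.
  - rewrite Rmult_0_r, exp_0. field; lra.
  - intros x Hx. rewrite (exp_density_neg _ x); auto; ring.
  - solve_derive.
  - solve_continuous.
  - solve_derive.
  - solve_continuous.
  - intros x Hx. rewrite Rmax_left, !exp_density_nonneg by lra. ring.
  - intros x Hx. rewrite Rmax_right, !exp_density_nonneg by lra. ring.
  - solve_lim0.
Qed.

Lemma EVmax_exp : EVmax lam = (3/2) / lam.
Proof.
  unfold EVmax, E2.
  rewrite (RInt_R_antiderivative 0 _
    (fun x => lam * x * exp (- lam * x) + exp (- lam * x) * exp (- lam * x))
    (fun x => - (x * exp (- lam * x)) - / lam * exp (- lam * x)
              - / (2 * lam) * (exp (- lam * x) * exp (- lam * x))) 0).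
  - rewrite Rmult_0_r, exp_0. field; lra.
  - intros x Hx. apply RInt_R_eq0. intros y. rewrite (exp_density_neg _ x); auto; ring.
  - solve_derive.
  - solve_continuous.
  - intros x Hx. apply RInt_R_max_density; lra.
  - solve_lim0.
Qed.

Lemma PrV_gt_exp p : 0 <= p -> PrV_gt lam p = exp (- lam * p).
Proof.
  intros Hp. unfold PrV_gt, Defs.E1.
  rewrite (RInt_R_antiderivative p _ (fun x => lam * exp (- lam * x))
             (fun x => - exp (- lam * x)) 0).
  - ring.
  - intros x Hx. destruct Rlt_dec; [lra | ring].
  - solve_derive.
  - solve_continuous.
  - intros x Hx. destruct Rlt_dec; [|lra]. rewrite exp_density_nonneg; lra.
  - solve_lim0.
Qed.

Lemma RInt_R_min_gt_density p v1 : 0 <= p ->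
  RInt_R (fun v2 => (if Rlt_dec p (Rmin v1 v2) then 1 else 0)
                    * exp_density lam v1 * exp_density lam v2)
  = if Rle_dec v1 p then 0 else lam * exp (- lam * v1) * exp (- lam * p).
Proof.
  intros Hp. destruct (Rle_dec v1 p) as [Hv1|Hv1].
  - apply RInt_R_eq0. intros y.
    destruct Rlt_dec as [h|h]; [pose proof (Rmin_l v1 y); lra | ring].
  - rewrite (RInt_R_antiderivative p _ (fun x => lam * exp (- lam * v1) * (lam * exp (- lam * x)))
               (fun x => - (lam * exp (- lam * v1)) * exp (- lam * x)) 0).
    + ring.
    + intros x Hx. destruct Rlt_dec as [h|h]; [pose proof (Rmin_r v1 x); lra | ring].
    + solve_derive.
    + solve_continuous.
    + intros x Hx. destruct Rlt_dec as [h|h].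
      * rewrite !exp_density_nonneg by lra. ring.
      * exfalso. apply h. apply Rmin_glb_lt; lra.
    + solve_lim0.
Qed.

Lemma PrVmin_gt_exp p : 0 <= p ->
  PrVmin_gt lam p = exp (- lam * p) * exp (- lam * p).
Proof.
  intros Hp. unfold PrVmin_gt, E2.
  rewrite (RInt_R_antiderivative p _ (fun x => exp (- lam * p) * (lam * exp (- lam * x)))
             (fun x => - exp (- lam * p) * exp (- lam * x)) 0).
  - ring.
  - intros x Hx. rewrite RInt_R_min_gt_density by lra. destruct Rle_dec; [reflexivity | lra].
  - solve_derive.
  - solve_continuous.
  - intros x Hx. rewrite RInt_R_min_gt_density by lra. destruct Rle_dec; [lra | ring].
  - solve_lim0.
Qed.

End Exponential.

Lemma exp_neg1_lt_half : exp (-1) < 1/2.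
Proof.
  replace (-1) with (- (1)) by ring. rewrite exp_Ropp. pose proof (exp_ineq1 1 ltac:(lra)).
  apply (Rmult_lt_reg_l (exp 1)); [lra|]. rewrite Rinv_r; lra.
Qed.

Lemma two_mul_le_exp x : 2 * x <= exp x.
Proof.
  destruct (Rle_dec x 0) as [Hx|Hx]; [pose proof (exp_pos x); lra|].
  replace x with (x/2 + x/2) at 2 by field. rewrite exp_plus.
  pose proof (exp_ineq1_le (x/2)).
  assert ((1 + x/2) * (1 + x/2) <= exp (x/2) * exp (x/2)) by (apply Rmult_le_compat; lra).
  pose proof (Rle_0_sqr (1 - x/2)). unfold Rsqr in *. lra.
Qed.

Lemma middle_region_bound q : 1/2 < q <= 3/2 -> q + q * (exp (- q) * exp (- q)) <= 15/8.
Proof.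
  intros Hq. rewrite <- exp_plus.
  pose proof exp_neg1_lt_half as He1. pose proof (exp_pos (- q + - q)) as He.
  destruct (Rle_dec q 1) as [Hq1|Hq1].
  - assert (exp (- q + - q) < exp (-1)) by (apply exp_increasing; lra). nra.
  - assert (exp (- q + - q) < exp (-1) * exp (-1))
      by (rewrite <- exp_plus; apply exp_increasing; lra).
    pose proof (exp_pos (-1)). nra.
Qed.

Lemma high_region_bound q : 2 * q * exp (- q) <= 1.
Proof.
  rewrite exp_Ropp. pose proof (two_mul_le_exp q). pose proof (exp_pos q).
  apply (Rmult_le_reg_r (exp q)); [lra|]. rewrite Rmult_assoc, Rinv_l; lra.
Qed.

Lemma Rev_r0_le lam p0 : 0 < lam -> 0 <= p0 -> Rev lam p0 0 <= 15 / (8 * lam).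
Proof.
  intros Hlam Hp0.
  assert (Hscale : forall x t, x <= t / lam <-> lam * x <= t).
  { intros x t. rewrite <- Rle_div_r, Rmult_comm by lra. reflexivity. }
  replace (15 / (8 * lam)) with ((15/8) / lam) by (field; lra).
  apply Hscale. unfold Rev.
  rewrite EVmin_exp, EVmax_exp, Rminus_0_r, !Rmult_1_l by exact Hlam.
  destruct Rle_dec as [Hlow|Hlow]; rewrite Hscale in Hlow; [nra|].
  destruct Rle_dec as [Hmid|Hmid]; rewrite Hscale in Hmid.
  - rewrite PrVmin_gt_exp by assumption.
    replace (- lam * p0) with (- (lam * p0)) by ring.
    pose proof (middle_region_bound (lam * p0)). nra.
  - rewrite PrV_gt_exp by assumption.
    replace (- lam * p0) with (- (lam * p0)) by ring.
    pose proof (high_region_bound (lam * p0)). nra.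
Qed.

Lemma Rev_0_1 lam : 0 < lam -> Rev lam 0 1 = 2 / lam.
Proof.
  intros Hlam. unfold Rev. rewrite EV_exp by exact Hlam.
  destruct Rle_dec as [_|h]; [field; lra | exfalso; apply h; lra].
Qed.

Lemma u_star_nonneg lam : 0 < lam -> Rbar_le 0 (u_star lam (2 / lam)).
Proof.
  intros Hlam. unfold u_star.
  apply (proj1 (Lub_Rbar_correct _)). exists 0, 1.
  split; [lra|]. split; [lra|].
  unfold Profit. rewrite Rev_0_1 by exact Hlam. ring.
Qed.

Lemma u_star_r0_neg lam : 0 < lam -> Rbar_lt (u_star_r0 lam (2 / lam)) 0.
Proof.
  intros Hlam. unfold u_star_r0.
  assert (Hle : Rbar_le (Lub_Rbar (fun x => exists p0, 0 <= p0 /\ x = Profit lam (2 / lam) p0 0))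
                        (- / (8 * lam))).
  { apply (proj2 (Lub_Rbar_correct _)). intros x [p0 [Hp0 ->]]. simpl.
    unfold Profit. pose proof (Rev_r0_le lam p0 Hlam Hp0).
    replace (- / (8 * lam)) with (15 / (8 * lam) - 2 / lam) by (field; lra). lra. }
  assert (0 < / (8 * lam)) by (apply Rinv_0_lt_compat; lra).
  destruct Lub_Rbar as [l| |]; simpl in *; auto; lra.
Qed.

Theorem corollary6 :
  exists lam c : R,
    Rbar_le (Finite 0) (u_star lam c) /\ Rbar_lt (u_star_r0 lam c) (Finite 0) /\
    0 < lam /\ 0 < c.
Proof.
  exists 1, (2 / 1).
  split; [|split; [|split]].
  - apply u_star_nonneg; lra.
  - apply u_star_r0_neg; lra.
  - lra.
  - lra.
Qed.
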